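(* Consider the grid and the operator $Q_{i,j}$ described in the context, fix a species index $l$ with valence $q^l\in\mathbb{R}$, a time step $\Delta t^{n+1}>0$, and a real grid function $\psi^{n+1}=(\psi^{n+1}_{i,j})$, and set $S^{l,n+1}_{i,j}=q^l\psi^{n+1}_{i,j}$. Suppose $c^{l,n}_{i,j}>0$ for all $1\le i\le N_x$, $1\le j\le N_y$, and that $c^{l,n+1}$ satisfies the backward Euler scheme $$h^x_ih^y_j\,\frac{c^{l,n+1}_{i,j}-c^{l,n}_{i,j}}{\Delta t^{n+1}}=Q_{i,j}(c^{l,n+1},S^{l,n+1})\qquad(1\le i\le N_x,\ 1\le j\le N_y).$$ Then $c^{l,n+1}_{i,j}>0$ for all $1\le i\le N_x$, $1\le j\le N_y$.
   Context: Grid on $\Omega=[a,b]\times[c,d]$: $a=x_{1/2}<x_{3/2}<\dots<x_{N_x+1/2}=b$, $c=y_{1/2}<\dots<y_{N_y+1/2}=d$; $x_i=(x_{i-1/2}+x_{i+1/2})/2$, $y_j=(y_{j-1/2}+y_{j+1/2})/2$; $h^x_i=x_{i+1/2}-x_{i-1/2}$, $h^y_j=y_{j+1/2}-y_{j-1/2}$; $h^x_{i+1/2}=x_{i+1}-x_i$ ($1\le i\le N_x-1$), $h^y_{j+1/2}=y_{j+1}-y_j$ ($1\le j\le N_y-1$). For grid functions $c,S$ define fluxes $\widehat g_{x,i+1/2,j}=\frac{c_{i+1,j}e^{S_{i+1,j}}-c_{i,j}e^{S_{i,j}}}{h^x_{i+1/2}}$ ($1\le i\le N_x-1$), $\widehat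 g_{y,i,j+1/2}=\frac{c_{i,j+1}e^{S_{i,j+1}}-c_{i,j}e^{S_{i,j}}}{h^y_{j+1/2}}$ ($1\le j\le N_y-1$), with zero-flux boundary values $\widehat g_{x,1/2,j}=\widehat g_{x,N_x+1/2,j}=\widehat g_{y,i,1/2}=\widehat g_{y,i,N_y+1/2}=0$; harmonic means $e^{-S_{i+1/2,j}}:=\frac{2e^{-S_{i+1,j}}e^{-S_{i,j}}}{e^{-S_{i+1,j}}+e^{-S_{i,j}}}$, $e^{-S_{i,j+1/2}}:=\frac{2e^{-S_{i,j+1}}e^{-S_{i,j}}}{e^{-S_{i,j+1}}+e^{-S_{i,j}}}$ (irrelevant at boundary half-indices, where fluxes vanish); and $$Q_{i,j}(c,S)=h^y_j\big(e^{-S_{i+1/2,j}}\widehat g_{x,i+1/2,j}-e^{-S_{i-1/2,j}}\widehat g_{x,i-1/2,j}\big)+h^x_i\big(e^{-S_{i,j+1/2}}\widehat g_{y,i,j+1/2}-e^{-S_{i,j-1/2}}\widehat g_{y,i,j-1/2}\big).$$ This is a discretization of the Nernst--Planck equation $\partial_tc^l=\nabla\cdot(e^{-q^l\psi}\nabla(c^le^{q^l\psi}))$ with zero-flux boundary conditions; in the full method $\psi^{n+1}$ is coupled to the concentrations through a discretized Poisson equation, here it is an arbitrary given grid function. *)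

From Stdlib Require Import Reals.
Open Scope R_scope.

(* Grid conventions (1-based cells, as in the paper):
   xf k = x_{k+1/2} for 0 <= k <= Nx  (so xf 0 = a, xf Nx = b),
   yf k = y_{k+1/2} for 0 <= k <= Ny.
   Grid functions are maps nat -> nat -> R, only used at 1<=i<=Nx, 1<=j<=Ny. *)

Definition strictly_increasing_on (f : nat -> R) (N : nat) : Prop :=
  forall k, (k < N)%nat -> f k < f (S k).

Definition center (f : nat -> R) (i : nat) : R := (f (i - 1)%nat + f i) / 2.
Definition hcell (f : nat -> R) (i : nat) : R := f i - f (i - 1)%nat.
(* dual width h_{i+1/2} = x_{i+1} - x_i *)
Definition hdual (f : nat -> R) (i : nat) : R := center f (S i) - center f i.

Definition hmean (s1 s2 : R) : R :=
  2 * exp (- s1) * exp (- s2) / (exp (- s1) + exp (- s2)).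

Definition gx (xf : nat -> R) (Nx : nat) (c s : nat -> nat -> R) (k j : nat) : R :=
  if ((1 <=? k) && (k <=? Nx - 1))%bool then
    (c (S k) j * exp (s (S k) j) - c k j * exp (s k j)) / hdual xf k
  else 0.

Definition gy (yf : nat -> R) (Ny : nat) (c s : nat -> nat -> R) (i k : nat) : R :=
  if ((1 <=? k) && (k <=? Ny - 1))%bool then
    (c i (S k) * exp (s i (S k)) - c i k * exp (s i k)) / hdual yf k
  else 0.

(* e^{-S_{k+1/2,j}} * ghat_{x,k+1/2,j}  (harmonic mean irrelevant where flux = 0) *)
Definition Fx xf Nx (c s : nat -> nat -> R) (k j : nat) : R :=
  hmean (s (S k) j) (s k j) * gx xf Nx c s k j.
Definition Fy yf Ny (c s : nat -> nat -> R) (i k : nat) : R :=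
  hmean (s i (S k)) (s i k) * gy yf Ny c s i k.

Definition Q (xf yf : nat -> R) (Nx Ny : nat) (c s : nat -> nat -> R) (i j : nat) : R :=
  hcell yf j * (Fx xf Nx c s i j - Fx xf Nx c s (i - 1)%nat j)
  + hcell xf i * (Fy yf Ny c s i j - Fy yf Ny c s i (j - 1)%nat).

(* Discrete minimum principle for the Slotboom variable u = c e^S.  Each flux
   e^{-S} ĝ is a nonnegative multiple of a difference of neighbouring values of u,
   so at a cell where u^{n+1} is minimal all outgoing fluxes are nonnegative and all
   incoming ones nonpositive, i.e. Q >= 0 there.  The scheme then gives
   c^{n+1} >= c^n > 0 at that cell, so the minimum of u^{n+1} is positive and,
   since e^S > 0, so is c^{n+1} everywhere. *)
From Stdlib Require Import Reals Lra Lia List.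
Open Scope R_scope.

Lemma strictly_increasing_on_pred (f : nat -> R) (N k : nat) :
  strictly_increasing_on f N -> (1 <= k <= N)%nat -> f (k - 1)%nat < f k.
Proof.
  intros Hf Hk. replace k with (S (k - 1)) at 2 by lia. apply Hf; lia.
Qed.

Lemma hcell_pos (f : nat -> R) (N k : nat) :
  strictly_increasing_on f N -> (1 <= k <= N)%nat -> 0 < hcell f k.
Proof.
  intros Hf Hk. pose proof (strictly_increasing_on_pred f N k Hf Hk).
  unfold hcell. lra.
Qed.

Lemma hdual_pos (f : nat -> R) (N k : nat) :
  strictly_increasing_on f N -> (1 <= k <= N - 1)%nat -> 0 < hdual f k.
Proof.
  intros Hf Hk.
  pose proof (strictly_increasing_on_pred f N k Hf ltac:(lia)) as Hl.
  assert (Hr : f k < f (S k)) by (apply Hf; lia).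
  unfold hdual, center. replace (S k - 1)%nat with k by lia. lra.
Qed.

Lemma hmean_pos (s1 s2 : R) : 0 < hmean s1 s2.
Proof.
  pose proof (exp_pos (- s1)). pose proof (exp_pos (- s2)).
  unfold hmean, Rdiv. apply Rmult_lt_0_compat.
  - apply Rmult_lt_0_compat; lra.
  - apply Rinv_0_lt_compat; lra.
Qed.

Definition slotboom (c s : nat -> nat -> R) (i j : nat) : R := c i j * exp (s i j).

Lemma slotboom_pos (c s : nat -> nat -> R) (i j : nat) :
  0 < slotboom c s i j <-> 0 < c i j.
Proof.
  pose proof (exp_pos (s i j)). unfold slotboom. split; intros Hpos.
  - destruct (Rle_dec (c i j) 0); [nra | lra].
  - now apply Rmult_lt_0_compat.
Qed.

Lemma Fx_boundary (xf : nat -> R) (Nx : nat) (c s : nat -> nat -> R) (k j : nat) :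
  ~ (1 <= k <= Nx - 1)%nat -> Fx xf Nx c s k j = 0.
Proof.
  intros Hk. unfold Fx, gx.
  destruct ((1 <=? k) && (k <=? Nx - 1))%bool eqn:E.
  - apply andb_prop in E as [E1 E2]. apply Nat.leb_le in E1, E2. lia.
  - apply Rmult_0_r.
Qed.

Lemma Fx_interior (xf : nat -> R) (Nx : nat) (c s : nat -> nat -> R) (k j : nat) :
  strictly_increasing_on xf Nx -> (1 <= k <= Nx - 1)%nat ->
  exists w, 0 < w /\
    Fx xf Nx c s k j = w * (slotboom c s (S k) j - slotboom c s k j).
Proof.
  intros Hxf Hk.
  exists (hmean (s (S k) j) (s k j) / hdual xf k). split.
  - apply Rdiv_lt_0_compat; [apply hmean_pos | exact (hdual_pos xf Nx k Hxf Hk)].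
  - pose proof (hdual_pos xf Nx k Hxf Hk).
    unfold Fx, gx, slotboom.
    replace ((1 <=? k) && (k <=? Nx - 1))%bool with true
      by (symmetry; apply andb_true_intro; split; apply Nat.leb_le; lia).
    field. lra.
Qed.

Lemma Fx_sign_at_min (xf : nat -> R) (Nx : nat) (c s : nat -> nat -> R) (i j : nat) :
  strictly_increasing_on xf Nx ->
  (forall k, (1 <= k <= Nx)%nat -> slotboom c s i j <= slotboom c s k j) ->
  Fx xf Nx c s (i - 1)%nat j <= 0 <= Fx xf Nx c s i j.
Proof.
  intros Hxf Hmin. split.
  - destruct (ltac:(lia) : (1 <= i - 1 <= Nx - 1)%nat \/ ~ (1 <= i - 1 <= Nx - 1)%nat)
      as [Hi | Hi]; [| rewrite Fx_boundary by exact Hi; lra].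
    destruct (Fx_interior xf Nx c s (i - 1) j Hxf Hi) as [w [Hw ->]].
    replace (S (i - 1)) with i by lia.
    assert (slotboom c s i j <= slotboom c s (i - 1) j) by (apply Hmin; lia).
    nra.
  - destruct (ltac:(lia) : (1 <= i <= Nx - 1)%nat \/ ~ (1 <= i <= Nx - 1)%nat)
      as [Hi | Hi]; [| rewrite Fx_boundary by exact Hi; lra].
    destruct (Fx_interior xf Nx c s i j Hxf Hi) as [w [Hw ->]].
    assert (slotboom c s i j <= slotboom c s (S i) j) by (apply Hmin; lia).
    nra.
Qed.

Lemma Fy_as_Fx (yf : nat -> R) (Ny : nat) (c s : nat -> nat -> R) (i k : nat) :
  Fy yf Ny c s i k = Fx yf Ny (fun k _ => c i k) (fun k _ => s i k) k i.
Proof. reflexivity. Qed.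

Lemma Fy_sign_at_min (yf : nat -> R) (Ny : nat) (c s : nat -> nat -> R) (i j : nat) :
  strictly_increasing_on yf Ny ->
  (forall k, (1 <= k <= Ny)%nat -> slotboom c s i j <= slotboom c s i k) ->
  Fy yf Ny c s i (j - 1)%nat <= 0 <= Fy yf Ny c s i j.
Proof.
  intros Hyf Hmin. rewrite !Fy_as_Fx. exact (Fx_sign_at_min yf Ny _ _ j i Hyf Hmin).
Qed.

Lemma Q_nonneg_at_min (xf yf : nat -> R) (Nx Ny : nat) (c s : nat -> nat -> R) (a b : nat) :
  strictly_increasing_on xf Nx -> strictly_increasing_on yf Ny ->
  (1 <= a <= Nx)%nat -> (1 <= b <= Ny)%nat ->
  (forall i j, (1 <= i <= Nx)%nat -> (1 <= j <= Ny)%nat ->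
     slotboom c s a b <= slotboom c s i j) ->
  0 <= Q xf yf Nx Ny c s a b.
Proof.
  intros Hxf Hyf Ha Hb Hmin.
  pose proof (Fx_sign_at_min xf Nx c s a b Hxf (fun k Hk => Hmin k b Hk Hb)).
  pose proof (Fy_sign_at_min yf Ny c s a b Hyf (fun k Hk => Hmin a k Ha Hk)).
  pose proof (hcell_pos xf Nx a Hxf Ha). pose proof (hcell_pos yf Ny b Hyf Hb).
  unfold Q. apply Rplus_le_le_0_compat; apply Rmult_le_pos; lra.
Qed.

Lemma exists_argmin_cons {A : Type} (f : A -> R) (l : list A) (a : A) :
  exists x, In x (a :: l) /\ forall y, In y (a :: l) -> f x <= f y.
Proof.
  revert a. induction l as [| b l IH]; intros a.
  - exists a. split; [now left |]. intros y [<- | []]. lra.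
  - destruct (IH b) as [x [Hx Hmin]].
    destruct (Rle_dec (f a) (f x)).
    + exists a. split; [now left |]. intros y [<- | Hy]; [lra |].
      specialize (Hmin y Hy). lra.
    + exists x. split; [now right |]. intros y [<- | Hy]; [lra |]. now apply Hmin.
Qed.

Lemma exists_argmin_grid (f : nat -> nat -> R) (N M : nat) :
  (1 <= N)%nat -> (1 <= M)%nat ->
  exists a b, (1 <= a <= N)%nat /\ (1 <= b <= M)%nat /\
    forall i j, (1 <= i <= N)%nat -> (1 <= j <= M)%nat -> f a b <= f i j.
Proof.
  intros HN HM.
  assert (Hgrid : forall i j,
    In (i, j) (list_prod (seq 1 N) (seq 1 M)) <-> (1 <= i <= N)%nat /\ (1 <= j <= M)%nat).
  { intros i j. rewrite in_prod_iff, !in_seq. lia. }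
  destruct (list_prod (seq 1 N) (seq 1 M)) as [| p l] eqn:E.
  { exfalso. apply (proj2 (Hgrid 1%nat 1%nat)). lia. }
  destruct (exists_argmin_cons (fun p => f (fst p) (snd p)) l p)
    as [[a b] [Hab Hmin]].
  exists a, b. apply Hgrid in Hab as [Ha Hb]. repeat split; try lia.
  intros i j Hi Hj. exact (Hmin (i, j) (proj2 (Hgrid i j) (conj Hi Hj))).
Qed.

Lemma le_of_implicit_step (h dt c0 c1 r : R) :
  0 < h -> 0 < dt -> h * ((c1 - c0) / dt) = r -> 0 <= r -> c0 <= c1.
Proof.
  intros Hh Hdt Hstep Hr.
  assert (Hquot : 0 <= (c1 - c0) / dt).
  { apply (Rmult_le_reg_l h); [exact Hh |]. now rewrite Rmult_0_r, Hstep. }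
  assert (Hdiff : 0 <= (c1 - c0) / dt * dt) by (apply Rmult_le_pos; lra).
  replace ((c1 - c0) / dt * dt) with (c1 - c0) in Hdiff by (field; lra).
  lra.
Qed.

Theorem theorem3 (Nx Ny : nat) (xf yf : nat -> R)
  (hNx : (1 <= Nx)%nat) (hNy : (1 <= Ny)%nat)
  (hxf : strictly_increasing_on xf Nx) (hyf : strictly_increasing_on yf Ny)
  (q dt : R) (hdt : 0 < dt) (psi cn cn1 : nat -> nat -> R) :
  (forall i j, (1 <= i <= Nx)%nat -> (1 <= j <= Ny)%nat -> 0 < cn i j) ->
  (forall i j, (1 <= i <= Nx)%nat -> (1 <= j <= Ny)%nat ->
     hcell xf i * hcell yf j * ((cn1 i j - cn i j) / dt)
     = Q xf yf Nx Ny cn1 (fun i j => q * psi i j) i j) ->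
  forall i j, (1 <= i <= Nx)%nat -> (1 <= j <= Ny)%nat -> 0 < cn1 i j.
Proof.
  intros Hpos Hscheme i j Hi Hj.
  set (s := fun i j => q * psi i j) in *.
  destruct (exists_argmin_grid (slotboom cn1 s) Nx Ny hNx hNy)
    as [a [b [Ha [Hb Hmin]]]].
  assert (Hvol : 0 < hcell xf a * hcell yf b).
  { apply Rmult_lt_0_compat;
      [exact (hcell_pos xf Nx a hxf Ha) | exact (hcell_pos yf Ny b hyf Hb)]. }
  assert (Hgrow : cn a b <= cn1 a b).
  { apply (le_of_implicit_step _ dt _ _ _ Hvol hdt (Hscheme a b Ha Hb)).
    exact (Q_nonneg_at_min xf yf Nx Ny cn1 s a b hxf hyf Ha Hb Hmin). }
  assert (Hmin_pos : 0 < slotboom cn1 s a b).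
  { apply slotboom_pos. pose proof (Hpos a b Ha Hb). lra. }
  apply (slotboom_pos cn1 s i j).
  pose proof (Hmin i j Hi Hj). lra.
Qed.
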